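(* Assume (A1)–(A4). There is a constant $K$ independent of $N$ such that for every $1\le i\le N$, $$\mathbb E\Big[\sup_{0\le t\le T}\big|\beta^*(t,\bar x_i(t),\bar x^{(N)}(t))-\bar\beta_N(t,\bar x_i(t),\bar x^{(N)}(t))\big|^2\Big]\le\frac K{N^2},$$ where $\bar x_i$ is the optimal state of Problem (LP).
   Context: For each $N\ge1$: on a complete filtered probability space, $W^0,W_1,\dots,W_N$ are independent 1-d Brownian motions; filtration generated by them and an independent $\mathcal F_0$. Data (independent of $N$): $T>0$, real constants $A,B,Q,R,G,\sigma,\sigma_0$, $a,b,q,r,g:\mathbb R\to\mathbb R$; primes denote derivatives. (A1) $Q,R,G,\sigma\ge0$, $\sigma_0>0$, $R>0$; $a,b,q,r,g$ bounded $C^2$ with bounded first and second derivatives. (A2) $\xi_1,\dots,\xi_N$ i.i.d., $\mathcal F_0$-measurable, fixed common law with finite second moment. (A3) $\exists\varepsilon_0>0$: $|R+\tfrac12r''(v)+yb''(v)|\ge\varepsilon_0$ for all $v,y$. $\rho$: the $C^1$ function with bounded derivative with $R\rho(y)+\tfrac12r'(\rho(y))+(B+b'(\rho(y)))y=0$. $P\ge0$ solves $\dot P+2AP+Q-R^{-1}B^2P^2=0$, $P(T)=G$. (A4) $a'(v)P(t)\ge R^{-1}Bb'(v)P(t)^2$, $B^2+Bb'(v)\ge0$ for all $t,v$. $k(t,x,y):=\rho(P(t)x+y)$, $\tilde b(t,x,y):=b(k(t,x,y))$. For $\theta\ge0$, PDE $\mathcal L_\theta$: $\partial_tF+\partial_xF[Ax+a(x)+Bk(t,x,F)+\tilde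 b(t,x,F)]+P(t)[a(x)+R^{-1}B^2P(t)x+Bk(t,x,F)+\tilde b(t,x,F)+a'(x)x]+\tfrac12(\theta+\sigma_0^2)\partial_{xx}F+\tfrac12q'(x)+(A+a'(x))F=0$, $F(T,x)=\tfrac12g'(x)$. $\Phi$, resp. $\Psi_N$, is its unique $C^{1,2}$ solution with bounded first and second $x$-derivatives for $\theta=0$, resp. $\theta=\sigma^2/N$. Feedback maps: $\beta^*(t,x,y):=-R^{-1}BP(t)(x-y)+k(t,y,\Phi(t,y))$ and $\bar\beta_N(t,x,y):=-R^{-1}BP(t)(x-y)+k(t,y,\Psi_N(t,y))$. Optimal states of Problem (LP): $\bar x_i$ solve $d\bar x_i=\{A\bar x_i+a(\bar x^{(N)})+B\bar\beta_N(t,\bar x_i,\bar x^{(N)})+b(k(t,\bar x^{(N)},\Psi_N(t,\bar x^{(N)})))\}dt+\sigma dW_i+\sigma_0dW^0$, $\bar x_i(0)=\xi_i$, with $\bar x^{(N)}=\frac1N\sum_i\bar x_i$ (the optimal controls are $\bar u_i=\bar\beta_N(t,\bar x_i,\bar x^{(N)})$). *)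

From HB Require Import structures.
From mathcomp Require Import all_boot all_order all_algebra.
From mathcomp Require Import all_classical all_reals all_analysis.
Set Implicit Arguments. Unset Strict Implicit. Unset Printing Implicit Defensive.
Import Order.TTheory GRing.Theory Num.Theory.
Import numFieldNormedType.Exports.
Local Open Scope classical_set_scope.
Local Open Scope ring_scope.

Record lq_data (R : realType) := LQData {
  hT : R; cA : R; cB : R; cQ : R; cR : R; cG : R; sig : R; sig0 : R;
  fa : R -> R; fb : R -> R; fq : R -> R; fr : R -> R; fg : R -> R }.

Section defs.
Variable R : realType.
Implicit Types (D : lq_data R) (f : R -> R).

Definition bounded_fun f := exists M : R, forall x, `|f x| <= M.

Definition bdd_C2 f :=
  (forall x, derivable f x 1) /\
  (forall x, derivable (derive1 f) x 1) /\
  continuous (derive1 (derive1 f)) /\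
  bounded_fun f /\ bounded_fun (derive1 f) /\ bounded_fun (derive1 (derive1 f)).

Definition hypA1 D :=
  0 < hT D /\
  0 <= cQ D /\ 0 <= cR D /\ 0 <= cG D /\ 0 <= sig D /\ 0 < sig0 D /\ 0 < cR D /\
  bdd_C2 (fa D) /\ bdd_C2 (fb D) /\ bdd_C2 (fq D) /\ bdd_C2 (fr D) /\ bdd_C2 (fg D).

Definition hypA3 D :=
  exists2 eps : R, 0 < eps & forall v y : R,
    eps <= `| cR D + 2^-1 * derive1 (derive1 (fr D)) v
               + y * derive1 (derive1 (fb D)) v |.

Definition is_rho D (rho : R -> R) :=
  [/\ forall y, derivable rho y 1,
      continuous (derive1 rho),
      bounded_fun (derive1 rho) &
      forall y, cR D * rho y + 2^-1 * derive1 (fr D) (rho y)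
                + (cB D + derive1 (fb D) (rho y)) * y = 0].

Definition is_riccati D (P : R -> R) :=
  [/\ {within `[0, hT D], continuous P},
      forall t, 0 < t < hT D -> derivable P t 1 /\
        derive1 P t + 2 * cA D * P t + cQ D
        - (cR D)^-1 * (cB D) ^+ 2 * (P t) ^+ 2 = 0,
      forall t, 0 <= t <= hT D -> 0 <= P t &
      P (hT D) = cG D].

Definition hypA4 D (P : R -> R) :=
  forall t v, 0 <= t <= hT D ->
    derive1 (fa D) v * P t >= (cR D)^-1 * cB D * derive1 (fb D) v * (P t) ^+ 2
    /\ (cB D) ^+ 2 + cB D * derive1 (fb D) v >= 0.

Definition kfun (P rho : R -> R) (t x y : R) := rho (P t * x + y).
Definition btilde D (P rho : R -> R) (t x y : R) := fb D (kfun P rho t x y).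

Definition pdt (F : R -> R -> R) t x := derive1 (fun s => F s x) t.
Definition pdx (F : R -> R -> R) t x := derive1 (F t) x.
Definition pdxx (F : R -> R -> R) t x := derive1 (fun z => derive1 (F t) z) x.

Definition strip D : set (R * R) := [set p | 0 <= p.1 <= hT D].
Definition ostrip D : set (R * R) := [set p | 0 < p.1 < hT D].

Definition pde_sol D (P rho : R -> R) (theta : R) (F : R -> R -> R) :=
  (forall t x, 0 <= t <= hT D ->
        derivable (F t) x 1 /\ derivable (fun z => pdx F t z) x 1) /\
  (forall t x, 0 < t < hT D -> derivable (fun s => F s x) t 1) /\
  {within strip D, continuous (fun p => F p.1 p.2)} /\
  {within strip D, continuous (fun p => pdx F p.1 p.2)} /\
  {within strip D, continuous (fun p => pdxx F p.1 p.2)} /\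
  {within ostrip D, continuous (fun p => pdt F p.1 p.2)} /\
  (exists M : R, forall t x, 0 <= t <= hT D ->
        `|pdx F t x| <= M /\ `|pdxx F t x| <= M) /\
  (forall t x, 0 < t < hT D ->
        pdt F t x
        + pdx F t x * (cA D * x + fa D x + cB D * kfun P rho t x (F t x)
                       + btilde D P rho t x (F t x))
        + P t * (fa D x + (cR D)^-1 * (cB D) ^+ 2 * P t * x
                 + cB D * kfun P rho t x (F t x) + btilde D P rho t x (F t x)
                 + derive1 (fa D) x * x)
        + 2^-1 * (theta + (sig0 D) ^+ 2) * pdxx F t x
        + 2^-1 * derive1 (fq D) x + (cA D + derive1 (fa D) x) * F t x = 0) /\
  (forall x, F (hT D) x = 2^-1 * derive1 (fg D) x).

(* feedback map: -R^{-1} B P(t) (x - y) + k(t, y, F(t,y)) ;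
   beta^* uses F = Phi, bar beta_N uses F = Psi_N *)
Definition feedback D (P rho : R -> R) (F : R -> R -> R) (t x y : R) :=
  - ((cR D)^-1 * cB D * P t * (x - y)) + kfun P rho t y (F t y).

Section prob.
Context {d : measure_display} {Omega : measurableType d}.
Variable Pr : probability Omega R.

Definition sigma_rv (X : Omega -> R) : set (set Omega) :=
  [set X @^-1` B | B in (@measurable _ R)].

Definition sigma_proc (T : R) (X : R -> Omega -> R) : set (set Omega) :=
  <<s \bigcup_(t in `[0, T]) sigma_rv (X t) >>.

Definition indep_family (I : eqType) (G : I -> set (set Omega)) :=
  forall (s : seq I) (E : I -> set Omega), uniq s ->
    (forall i, i \in s -> G i (E i)) ->
    Pr (\big[setI/setT]_(i <- s) E i) = (\prod_(i <- s) Pr (E i))%E.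

Definition is_BM (T : R) (W : R -> Omega -> R) :=
  [/\ forall t, 0 <= t <= T -> measurable_fun setT (W t),
      {ae Pr, forall w, W 0 w = 0},
      {ae Pr, forall w, {within `[0, T], continuous (fun t => W t w)}},
      forall s t (B : set R), 0 <= s -> s < t -> t <= T -> measurable B ->
        Pr ((fun w => W t w - W s w) @^-1` B) = normal_prob 0 (Num.sqrt (t - s)) B &
      forall (n : nat) (ts : nat -> R), 0 <= ts 0%N ->
        (forall k, (k < n)%N -> ts k <= ts k.+1) -> ts n <= T ->
        indep_family (fun k : 'I_n => sigma_rv (fun w => W (ts k.+1) w - W (ts k) w))].
End prob.

Definition sup_on (T : R) (f : R -> R) : \bar R :=
  ereal_sup [set (f t)%:E | t in `[0, T]].

Definition emp_mean (N : nat) (x : 'I_N -> R -> R) (t : R) : R :=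
  N%:R^-1 * \sum_(j < N) x j t.

Definition lp_drift D (P rho : R -> R) (Psi : R -> R -> R) (N : nat)
    (x : 'I_N -> R -> R) (i : 'I_N) (s : R) : R :=
  let m := emp_mean x s in
  cA D * x i s + fa D m + cB D * feedback D P rho Psi s (x i s) m
  + fb D (kfun P rho s m (Psi s m)).

Section lp.
Context {d : measure_display} {Omega : measurableType d}.
Variable Pr : probability Omega R.

Definition lp_indep (T : R) (N : nat) (xi : 'I_N -> Omega -> R)
    (W0 : R -> Omega -> R) (W : 'I_N -> R -> Omega -> R) :=
  indep_family Pr (fun k : ('I_N + option 'I_N)%type =>
    match k with
    | inl i => sigma_rv (xi i)
    | inr None => sigma_proc T W0
    | inr (Some i) => sigma_proc T (W i)
    end).

(* xbar is (a.s.) a continuous solution on [0,T] of the state equations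
   d xbar_i = drift_i dt + sigma dW_i + sigma_0 dW^0, xbar_i(0) = xi_i,
   written in integral form (the noise is additive) *)
Definition drift_int D (P rho : R -> R) (Psi : R -> R -> R) (N : nat)
    (x : 'I_N -> R -> R) (i : 'I_N) (t : R) : R :=
  \int[lebesgue_measure]_(s in `[0, t]) lp_drift D P rho Psi x i s.

Definition solves_LP D (P rho : R -> R) (Psi : R -> R -> R) (N : nat)
    (xi : 'I_N -> Omega -> R) (W0 : R -> Omega -> R) (W : 'I_N -> R -> Omega -> R)
    (xbar : 'I_N -> R -> Omega -> R) : Prop :=
  {ae Pr, forall w, forall i : 'I_N,
     {within `[0, hT D], continuous (fun t => xbar i t w)} /\
     (forall t, 0 <= t <= hT D ->
       xbar i t w = xi i w + drift_int D P rho Psi (fun j u => xbar j u w) i t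
         + sig D * W i t w + sig0 D * W0 t w)}.
End lp.

End defs.

(* The feedback maps differ only through
   rho (P t y + Phi (t, y)) - rho (P t y + Psi_N (t, y)), and rho is Lipschitz.
   The difference u = Phi - Psi_N vanishes at t = T and solves a linear backward parabolic
   equation  u_t + b u_x + a u_xx = F  whose drift b (that of Psi_N) has linear growth and
   whose source satisfies |F| <= c |u| + f0 with f0 = (sigma^2 / 2N) sup |Phi_xx| and c
   depending only on the data and on Phi.  A maximum principle for such equations gives
   |u| <= T e^((c + 1) T) f0.  It is proved by penalization: the function
   e^((c + 1) t) u - e^((c + 1) T) f0 (T - t) - eps (1 + x^2) e^(k (T - t)) cannot have a
   positive maximum on [t1, T] x R, because at such a point the first- and second-order
   conditions contradict the equation; letting eps -> 0 and then t1 -> 0 gives the bound. *)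

From HB Require Import structures.
From mathcomp Require Import all_boot all_order all_algebra.
From mathcomp Require Import all_classical all_reals all_analysis.
From mathcomp Require Import lra ring.
Set Implicit Arguments. Unset Strict Implicit. Unset Printing Implicit Defensive.
Import Order.TTheory GRing.Theory Num.Theory.
Import numFieldNormedType.Exports.
Local Open Scope classical_set_scope.
Local Open Scope ring_scope.

Section real_calculus.
Variable R : realType.
Implicit Types (f g : R -> R) (x e : R).

Lemma derive1_gt0_right f x : derivable f x 1 -> 0 < derive1 f x ->
  exists2 e, 0 < e & forall h : R, 0 < h < e -> f x < f (x + h).
Proof.
move=> df dpos.
have cv : (fun h => h^-1 *: ((f \o shift x) (h *: 1) - f x)) @ 0^' --> derive1 f x.
  by rewrite derive1E; exact: df.
have [e /= e0 He] := cvgr_gt _ cv _ dpos.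
exists e => // h /andP[h0 he].
have := He h; rewrite /ball /= sub0r normrN gtr0_norm // => /(_ he (lt0r_neq0 h0)).
rewrite /= [_%:A]mulr1 /GRing.scale /=.
by rewrite pmulr_rgt0 ?invr_gt0 // subr_gt0 addrC.
Qed.

Lemma right_max_derive1_le0 f x e : derivable f x 1 -> 0 < e ->
  (forall h : R, 0 < h < e -> f (x + h) <= f x) -> derive1 f x <= 0.
Proof.
move=> df e0 fmax; rewrite leNgt; apply/negP => /(derive1_gt0_right df) [e' e'0 fincr].
pose h := Num.min e e' / 2.
have h0 : 0 < h by rewrite divr_gt0 // lt_min e0 e'0.
have [me me'] : Num.min e e' <= e /\ Num.min e e' <= e'.
  by rewrite !ge_min !lexx orbT.
have [he he'] : h < e /\ h < e' by rewrite /h; split; lra.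
by have := fmax h; have := fincr h; rewrite h0 he he' /= => /(_ isT) lt /(_ isT); lra.
Qed.

Lemma max_derive1_eq0_derive2_le0 f x :
  (forall y, derivable f y 1) -> (forall y, derivable (derive1 f) y 1) ->
  (forall y, f y <= f x) -> derive1 f x = 0 /\ derive1 (derive1 f) x <= 0.
Proof.
move=> d1 d2 fmax.
have f'0 : derive1 f x = 0.
  have x_in : x \in `](x - 1), (x + 1)[ by rewrite in_itv /=; apply/andP; split; lra.
  rewrite derive1E; apply: derive_val.
  by apply: (@derive1_at_max R f (x - 1) (x + 1) x) => //; lra.
split => //; rewrite leNgt; apply/negP => /(derive1_gt0_right (d2 x)) [e e0 f'incr].
have xlt : x < x + e / 2 by lra.
have hd : forall y, y \in `]x, x + e / 2[ -> is_derive y 1 f (derive1 f y).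
  by move=> y _; rewrite derive1E; apply/derivableP/d1.
have hc : {within `[x, x + e / 2], continuous f}.
  by apply: derivable_within_continuous => y _; exact: d1.
have [c] := MVT xlt hd hc; rewrite in_itv /= => /andP[c1 c2] fE.
have := f'incr (c - x); rewrite f'0 subr_gt0 c1 (_ : x + (c - x) = c); last by ring.
have -> : c - x < e by lra.
move=> /(_ isT) f'c_gt0.
have := fmax (x + e / 2); rewrite -subr_le0 fE.
by rewrite leNgt => /negP; apply; apply: mulr_gt0 => //; lra.
Qed.

Lemma bounded_derive1_lipschitz f M :
  (forall y, derivable f y 1) -> (forall y, `|derive1 f y| <= M) ->
  forall x y, `|f y - f x| <= M * `|y - x|.
Proof.
move=> d1 bM.
suff lt_case : forall x y, x < y -> `|f y - f x| <= M * `|y - x|.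
  move=> x y; case: (ltgtP x y) => [|yx|->]; first exact: lt_case.
    by rewrite distrC (distrC y); exact: lt_case.
  by rewrite !subrr normr0 mulr0.
move=> x y xy.
have hd : forall z, z \in `]x, y[ -> is_derive z 1 f (derive1 f z).
  by move=> z _; rewrite derive1E; apply/derivableP/d1.
have hc : {within `[x, y], continuous f}.
  by apply: derivable_within_continuous => z _; exact: d1.
have [c _ ->] := MVT xy hd hc.
by rewrite normrM; apply: ler_wpM2r.
Qed.

Lemma within_continuous_le_left_end (T C : R) g : 0 < T ->
  {within `[0, T], continuous g} -> (forall t, 0 < t <= T -> g t <= C) -> g 0 <= C.
Proof.
move=> T0 /subspace_continuousP cg gC; rewrite leNgt; apply/negP => Cg.
have in0 : [set` `[0, T]] 0 by rewrite /= in_itv /= lexx ltW.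
have [e /= e0 He] := cvgr_gt _ (cg 0 in0) _ Cg.
pose m := Num.min e T.
have [m1 m2 m0] : [/\ m <= e, m <= T & 0 < m].
  by rewrite /m ge_min lexx ge_min lexx orbT lt_min e0 T0.
have := He (m / 2); rewrite /ball /= sub0r normrN gtr0_norm; last lra.
rewrite in_itv /= (_ : m / 2 < e); last lra.
rewrite (_ : 0 <= m / 2 <= T); last by apply/andP; split; lra.
by move=> /(_ isT isT); rewrite ltNge => /negP; apply; apply: gC; apply/andP; split; lra.
Qed.

End real_calculus.

Section two_variables.
Variable R : realType.
Implicit Types (T : R) (u f g : R -> R -> R).

Definition c12_on T u :=
  [/\ forall t x : R, 0 <= t <= T -> derivable (u t) x 1 /\ derivable (fun z => pdx u t z) x 1,
      forall t x : R, 0 < t < T -> derivable (fun s => u s x) t 1 &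
      {within [set p : R * R | 0 <= p.1 <= T], continuous (fun p => u p.1 p.2)}].

Lemma pde_sol_c12_on (D : lq_data R) P rho theta F :
  pde_sol D P rho theta F -> c12_on (hT D) F.
Proof. by case=> dx [dt [cF _]]; split. Qed.

Lemma within_continuous_slice (S : set (R * R)) (A : set R) u x :
  (forall t, A t -> S (t, x)) ->
  {within S, continuous (fun p => u p.1 p.2)} -> {within A, continuous (fun t => u t x)}.
Proof.
move=> AS /subspace_continuousP cu; apply/subspace_continuousP => t At W /=.
move=> /(cu (t, x) (AS t At)) /=.
rewrite /within /= nbhs_simpl /= => -[[U V] /= [Ut Vx] UV].
apply: filterS Ut => s Us As; apply: (UV (s, x)) => //=.
  by split => //; exact: nbhs_singleton.
exact: AS.
Qed.

Section difference.
Variables (T : R) (f g : R -> R -> R).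
Hypotheses (f_c12 : c12_on T f) (g_c12 : c12_on T g).

Lemma pdxB (t : R) : 0 <= t <= T ->
  pdx (fun s y => f s y - g s y) t = (fun x => pdx f t x - pdx g t x).
Proof.
case: f_c12 g_c12 => [df _ _] [dg _ _] tI; apply/funext => x.
by rewrite /pdx !derive1E deriveB //; [exact: (df t x tI).1 | exact: (dg t x tI).1].
Qed.

Lemma pdxxB (t x : R) : 0 <= t <= T ->
  pdxx (fun s y => f s y - g s y) t x = pdxx f t x - pdxx g t x.
Proof.
case: f_c12 g_c12 => [df _ _] [dg _ _] tI.
rewrite /pdxx (_ : (fun z => _) = fun z => pdx f t z - pdx g t z); last exact: pdxB.
rewrite !derive1E deriveB //.
  exact: (df t x tI).2.
exact: (dg t x tI).2.
Qed.

Lemma pdtB (t x : R) : 0 < t < T ->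
  pdt (fun s y => f s y - g s y) t x = pdt f t x - pdt g t x.
Proof.
case: f_c12 g_c12 => [_ df _] [_ dg _] tI.
by rewrite /pdt !derive1E deriveB //; [exact: df | exact: dg].
Qed.

Lemma c12_onB : c12_on T (fun t x => f t x - g t x).
Proof.
case: f_c12 g_c12 => [dxf dtf cf] [dxg dtg cg]; split.
- move=> t x tI; rewrite (pdxB tI); split; apply: derivableB.
  + exact: (dxf t x tI).1.
  + exact: (dxg t x tI).1.
  + exact: (dxf t x tI).2.
  + exact: (dxg t x tI).2.
- by move=> t x tI; apply: derivableB; [exact: dtf | exact: dtg].
- move: cf cg => /subspace_continuousP cf /subspace_continuousP cg.
  by apply/subspace_continuousP => p Sp; exact: cvgB (cf p Sp) (cg p Sp).
Qed.

End difference.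
End two_variables.

Section maximum_principle.
Variable R : realType.
Variables (T a c0 f0 K1 B0 : R) (u b : R -> R -> R).
Hypotheses (T_gt0 : 0 < T) (a_ge0 : 0 <= a) (c0_ge0 : 0 <= c0) (f0_ge0 : 0 <= f0)
  (K1_ge0 : 0 <= K1) (B0_ge0 : 0 <= B0) (u_c12 : c12_on T u).
Hypothesis u_growth : forall t x : R, 0 <= t <= T -> u t x <= K1 * (1 + `|x|).
Hypothesis b_growth : forall t x : R, 0 < t < T -> `|b t x| <= B0 * (1 + `|x|).
Hypothesis u_T_le0 : forall x, u T x <= 0.
Hypothesis u_operator_ge : forall t x : R, 0 < t < T ->
  - c0 * `|u t x| - f0 <= pdt u t x + b t x * pdx u t x + a * pdxx u t x.

Local Notation lam := (c0 + 1).
Local Notation F0 := (expR (lam * T) * f0).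
Local Notation kap := (4 * B0 + 2 * a + 1).

(* The term [F0 * (T - t)] absorbs the source, the weight [expR (lam * t)] the
   zeroth-order term, and the penalty in [x] forces a maximum at finite [x]. *)
Definition penalized (e t x : R) :=
  expR (lam * t) * u t x - F0 * (T - t) - e * (1 + x ^+ 2) * expR (kap * (T - t)).

Lemma penalized_continuous (e : R) :
  {within [set p : R * R | 0 <= p.1 <= T], continuous (fun p => penalized e p.1 p.2)}.
Proof.
case: u_c12 => _ _ /subspace_continuousP cu; apply/subspace_continuousP => p Sp.
have c1 : (fun q : R * R => q.1) @ within [set p : R * R | 0 <= p.1 <= T] (nbhs p) --> p.1.
  by apply: cvg_within_filter; exact: cvg_fst.
have c2 : (fun q : R * R => q.2) @ within [set p : R * R | 0 <= p.1 <= T] (nbhs p) --> p.2.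
  by apply: cvg_within_filter; exact: cvg_snd.
apply: cvgB; [apply: cvgB|].
- apply: cvgM; last exact: cu.
  exact: (cvg_comp _ _ (cvgM (cvg_cst lam) c1) (@continuous_expR R _)).
- exact: cvgM (cvg_cst _) (cvgB (cvg_cst _) c1).
- apply: cvgM; first by rewrite expr2; exact: cvgM (cvg_cst _) (cvgD (cvg_cst _) (cvgM c2 c2)).
  exact: (cvg_comp _ _ (cvgM (cvg_cst kap) (cvgB (cvg_cst T) c1)) (@continuous_expR R _)).
Qed.

Lemma penalized_T_le0 (e x : R) : 0 <= e -> penalized e T x <= 0.
Proof.
move=> e0; rewrite /penalized subrr !mulr0 expR0 mulr1 subr0.
have := u_T_le0 x; have := expR_gt0 (lam * T).
have : 0 <= e * (1 + x ^+ 2) by rewrite mulr_ge0 // addr_ge0 ?sqr_ge0.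
nra.
Qed.

Lemma penalized_lt0_far (e t x : R) : 0 < e -> 0 <= t <= T ->
  1 + 2 * (expR (lam * T) * K1) / e < `|x| -> penalized e t x < 0.
Proof.
move=> e0 /andP[t0 tT] Xx; set E := expR (lam * T) * K1 in Xx.
have E0 : 0 <= E by rewrite mulr_ge0 ?expR_ge0.
have uE : expR (lam * t) * u t x <= E * (1 + `|x|).
  have [u0|u0] := leP 0 (u t x); last first.
    have : 0 <= E * (1 + `|x|) by rewrite mulr_ge0 // addr_ge0.
    by have := expR_gt0 (lam * t); nra.
  apply: (@le_trans _ _ (expR (lam * T) * u t x)).
    by apply: ler_wpM2r => //; rewrite ler_expR; apply: ler_wpM2l; have := c0_ge0; lra.
  by rewrite /E -mulrA ler_wpM2l ?expR_ge0 // u_growth ?t0.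
have pen : e * (1 + x ^+ 2) <= e * (1 + x ^+ 2) * expR (kap * (T - t)).
  have ka_ge0 : 0 <= kap by have := a_ge0; have := B0_ge0; lra.
  have ge1 : 1 <= expR (kap * (T - t)).
    have : 0 <= kap * (T - t) by rewrite mulr_ge0 ?subr_ge0.
    by have := expR_ge1Dx (kap * (T - t)); lra.
  by rewrite ler_peMr // mulr_ge0 ?addr_ge0 ?sqr_ge0 ?ltW.
have quad : E * (1 + `|x|) < e * (1 + x ^+ 2).
  rewrite -(real_normK (num_real x)).
  have en : 2 * E < (`|x| - 1) * e by rewrite -ltr_pdivrMr //; lra.
  have x_gt1 : 1 < `|x|.
    by rewrite -subr_gt0 -(pmulr_lgt0 _ e0); lra.
  have := normr_ge0 x; nra.
have : 0 <= F0 * (T - t) by rewrite !mulr_ge0 ?expR_ge0 ?subr_ge0.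
rewrite /penalized; lra.
Qed.

Lemma penalized_dx (e t y : R) : 0 <= t <= T ->
  is_derive y 1 (penalized e t)
    (expR (lam * t) * pdx u t y - e * expR (kap * (T - t)) * (2 * y)).
Proof.
case: u_c12 => du _ _ tI.
have : is_derive y 1 (u t) (pdx u t y) by rewrite /pdx derive1E; apply/derivableP/(du t y tI).1.
move=> ud.
have -> : penalized e t = cst (expR (lam * t)) * u t - cst (F0 * (T - t))
    - cst (e * expR (kap * (T - t))) * (cst 1 + id ^+ 2).
  by apply/funext => z; rewrite /penalized !fctE /=; ring.
by apply: is_derive_eq; rewrite /= /GRing.scale /=; ring.
Qed.

Lemma penalized_dxx (e t y : R) : 0 <= t <= T ->
  is_derive y 1 (derive1 (penalized e t))
    (expR (lam * t) * pdxx u t y - e * expR (kap * (T - t)) * 2).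
Proof.
case: u_c12 => du _ _ tI.
have : is_derive y 1 (fun z => pdx u t z) (pdxx u t y).
  by rewrite /pdxx derive1E; apply/derivableP/(du t y tI).2.
move=> ud.
have -> : derive1 (penalized e t) = cst (expR (lam * t)) * (fun z => pdx u t z)
    - cst (e * expR (kap * (T - t))) * (cst 2 * id).
  apply/funext => z; rewrite derive1E (@derive_val _ _ _ _ _ _ _ (penalized_dx e z tI)) /=.
  by rewrite !fctE /=; ring.
by apply: is_derive_eq; rewrite /= /GRing.scale /=; ring.
Qed.

Lemma penalized_dt (e t x : R) : 0 < t < T ->
  is_derive t 1 (fun s => penalized e s x)
    (lam * expR (lam * t) * u t x + expR (lam * t) * pdt u t x + F0
     + e * expR (kap * (T - t)) * (1 + x ^+ 2) * kap).
Proof.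
case: u_c12 => _ dt _ tI.
have : is_derive t 1 (fun s => u s x) (pdt u t x).
  by rewrite /pdt derive1E; apply/derivableP/dt.
move=> ud.
have -> : (fun s => penalized e s x) = (expR \o (cst lam * id)) * (fun s => u s x)
    - cst F0 * (cst T - id) - cst (e * (1 + x ^+ 2)) * (expR \o (cst kap * (cst T - id))).
  by apply/funext => s; rewrite /penalized /=.
by apply: is_derive_eq; rewrite /= /GRing.scale /=; ring.
Qed.

(* This is where the choice of [kap] enters. *)
Lemma positive_max_conditions_absurd (E1 F U Pt Px Pxx B x W : R) :
  0 < E1 -> 0 < U -> 0 < W -> E1 * f0 <= F -> `|B| <= B0 * (1 + `|x|) ->
  lam * E1 * U + E1 * Pt + F + W * (1 + x ^+ 2) * kap <= 0 ->
  E1 * Px = W * (2 * x) -> E1 * Pxx <= W * 2 ->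
  - c0 * U - f0 <= Pt + B * Px + a * Pxx -> False.
Proof.
move=> E1_gt0 U_gt0 W_gt0 f0F Bb time_le0 Px_eq Pxx_le pde.
have Bx : W * (B * x) <= W * (2 * B0 * (1 + x ^+ 2)).
  apply: ler_wpM2l; first exact: ltW.
  rewrite -(real_normK (num_real x)); apply: le_trans (ler_norm _) _; rewrite normrM.
  have := normr_ge0 x; have := normr_ge0 B; have := B0_ge0; nra.
have aPxx : a * (E1 * Pxx) <= a * (W * 2) by exact: ler_wpM2l.
have aW : a * W <= a * W * (1 + x ^+ 2).
  have Y1 : 1 <= 1 + x ^+ 2 by rewrite lerDl sqr_ge0.
  by rewrite ler_peMr // mulr_ge0 // ltW.
have BPx : E1 * (B * Px) = 2 * (W * (B * x)) by rewrite mulrCA Px_eq; ring.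
have := ler_wpM2l (ltW E1_gt0) pde; rewrite !mulrDr BPx.
have := mulr_gt0 E1_gt0 U_gt0; have := mulr_gt0 W_gt0 (ltr_pwDl ltr01 (sqr_ge0 x)).
lra.
Qed.

Lemma penalized_interior_max_le0 (e ts xs : R) : 0 < e -> 0 < ts < T ->
  (forall y, penalized e ts y <= penalized e ts xs) ->
  (forall h : R, 0 < h < T - ts -> penalized e (ts + h) xs <= penalized e ts xs) ->
  penalized e ts xs <= 0.
Proof.
move=> e0 tsI xmax tmax; rewrite leNgt; apply/negP => pos.
have tsI' : 0 <= ts <= T by case/andP: tsI => *; rewrite !ltW.
have [+ +] := max_derive1_eq0_derive2_le0
  (fun y => @ex_derive _ _ _ _ _ _ _ (penalized_dx e y tsI'))
  (fun y => @ex_derive _ _ _ _ _ _ _ (penalized_dxx e y tsI')) xmax.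
rewrite !derive1E (@derive_val _ _ _ _ _ _ _ (penalized_dx e xs tsI')).
rewrite (@derive_val _ _ _ _ _ _ _ (penalized_dxx e xs tsI')) => dx0 dxx_le0.
have := right_max_derive1_le0 (@ex_derive _ _ _ _ _ _ _ (penalized_dt e xs tsI)) _ tmax.
rewrite derive1E (@derive_val _ _ _ _ _ _ _ (penalized_dt e xs tsI)) subr_gt0.
case/andP: tsI => ts0 tsT => /(_ tsT) time_le0.
have U_gt0 : 0 < u ts xs.
  have : 0 <= F0 * (T - ts) by rewrite !mulr_ge0 ?expR_ge0 ?subr_ge0 // ltW.
  have : 0 <= e * (1 + xs ^+ 2) * expR (kap * (T - ts)).
    by rewrite !mulr_ge0 ?expR_ge0 ?addr_ge0 ?sqr_ge0 ?ltW.
  move: pos; rewrite /penalized => pos h1 h2.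
  by rewrite -(pmulr_rgt0 _ (expR_gt0 (lam * ts))); lra.
apply: (@positive_max_conditions_absurd (expR (lam * ts)) F0 (u ts xs) (pdt u ts xs) (pdx u ts xs)
  (pdxx u ts xs) (b ts xs) xs (e * expR (kap * (T - ts)))).
- exact: expR_gt0.
- exact: U_gt0.
- by rewrite mulr_gt0 ?expR_gt0.
- by rewrite ler_wpM2r // ler_expR ler_wpM2l ?ltW //; have := c0_ge0; lra.
- by apply: b_growth; rewrite ts0.
- exact: time_le0.
- lra.
- lra.
- by have := @u_operator_ge ts xs; rewrite ts0 tsT gtr0_norm // => /(_ isT).
Qed.

Lemma penalized_le0 (e t1 x0 : R) : 0 < e -> 0 < t1 <= T -> penalized e t1 x0 <= 0.
Proof.
move=> e0 /andP[t10 t1T]; rewrite leNgt; apply/negP => pos.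
set X := 1 + 2 * (expR (lam * T) * K1) / e.
have X_ge1 : 1 <= X.
  rewrite lerDl; apply: divr_ge0; last exact: ltW.
  by apply: mulr_ge0; [lra | rewrite mulr_ge0 ?expR_ge0].
pose Kc := [set` `[t1, T]] `*` [set` `[- X, X]].
have Kc_compact : compact Kc by apply: compact_setX; exact: segment_compact.
have Kc0 : Kc !=set0.
  by exists (t1, 0); split; rewrite /= in_itv /= ?lexx ?t1T //; apply/andP; split; lra.
have Kc_strip : Kc `<=` [set p : R * R | 0 <= p.1 <= T].
  by move=> [t x] [/= + _]; rewrite in_itv /= => /andP[h1 h2]; apply/andP; split => //; lra.
have [[ts xs] /set_mem [/= tsK xsK] zmax] :=
  compact_EVT_max Kc0 Kc_compact (continuous_subspaceW Kc_strip (@penalized_continuous e)).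
move: tsK xsK; rewrite !in_itv /= => /andP[ts1 tsT] xsX; rewrite -ler_norml in xsX.
have in_Kc t x : t1 <= t <= T -> `|x| <= X -> penalized e t x <= penalized e ts xs.
  by move=> tI xX; apply: (zmax (t, x)); rewrite inE; split; rewrite /= in_itv //= -ler_norml.
have far t x : t1 <= t <= T -> X < `|x| -> penalized e t x < 0.
  by case/andP => tt1 tT; apply: penalized_lt0_far => //; apply/andP; split; lra.
have x0X : `|x0| <= X.
  rewrite leNgt; apply/negP => /(far t1); rewrite lexx t1T => /(_ isT); lra.
have pos_s : 0 < penalized e ts xs by apply: lt_le_trans pos (in_Kc _ _ _ x0X); rewrite lexx t1T.
have tsT' : ts < T.
  rewrite lt_neqAle tsT andbT; apply/negP => /eqP tsE; move: pos_s; rewrite tsE.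
  by have := penalized_T_le0 xs (ltW e0); lra.
suff : penalized e ts xs <= 0 by lra.
apply: penalized_interior_max_le0 => //; first by apply/andP; split; lra.
- move=> y; have [yX|yX] := leP `|y| X; first by apply: in_Kc; rewrite ?ts1.
  by apply: ltW; apply: lt_trans pos_s; apply: far; rewrite ?ts1.
- by move=> h /andP[h0 hT]; apply: in_Kc => //; apply/andP; split; lra.
Qed.

Lemma max_principle_pos (t x : R) : 0 < t <= T -> u t x <= T * F0.
Proof.
move=> tI; case/andP: (tI) => t0 tT.
have weighted : expR (lam * t) * u t x <= F0 * (T - t).
  apply/ler_addgt0Pr => e e0.
  set c := (1 + x ^+ 2) * expR (kap * (T - t)).
  have c_gt0 : 0 < c by rewrite mulr_gt0 ?expR_gt0 // ltr_wpDr ?sqr_ge0 ?ltr01.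
  have := @penalized_le0 (e / c) t x (divr_gt0 e0 c_gt0) tI; rewrite /penalized.
  have -> : e / c * (1 + x ^+ 2) * expR (kap * (T - t)) = e.
    by rewrite -mulrA -/c divfK ?gt_eqF.
  lra.
have F0_ge0 : 0 <= F0 by rewrite mulr_ge0 ?expR_ge0.
have [u0|u0] := leP 0 (u t x); last first.
  by apply: le_trans (ltW u0) _; apply: mulr_ge0 => //; exact: ltW.
have : u t x <= expR (lam * t) * u t x.
  have bt : 0 <= lam * t by apply: mulr_ge0; [have := c0_ge0; lra | exact: ltW].
  by rewrite ler_peMl //; have := expR_ge1Dx (lam * t); lra.
have : F0 * (T - t) <= T * F0 by rewrite [T * _]mulrC; apply: ler_wpM2l => //; lra.
lra.
Qed.

Lemma max_principle (t x : R) : 0 <= t <= T -> u t x <= T * (expR ((c0 + 1) * T) * f0).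
Proof.
case/andP => t0 tT; have [->|t_neq0] := eqVneq t 0; last first.
  by apply: max_principle_pos; rewrite lt_neqAle eq_sym t_neq0 t0.
apply: (within_continuous_le_left_end (g := fun s => u s x) T_gt0) => [|s].
  by case: u_c12 => _ _ cu; apply: (within_continuous_slice _ cu) => s; rewrite /= in_itv.
exact: max_principle_pos.
Qed.

End maximum_principle.

Section difference_principle.
Variables (R : realType) (T a c0 f0 K1 B0 : R) (b : R -> R -> R).
Hypotheses (T_gt0 : 0 < T) (a_ge0 : 0 <= a) (c0_ge0 : 0 <= c0) (f0_ge0 : 0 <= f0)
  (K1_ge0 : 0 <= K1) (B0_ge0 : 0 <= B0).
Hypothesis b_growth : forall t x : R, 0 < t < T -> `|b t x| <= B0 * (1 + `|x|).

Definition diff_operator (f g : R -> R -> R) t x :=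
  pdt f t x - pdt g t x + b t x * (pdx f t x - pdx g t x) + a * (pdxx f t x - pdxx g t x).

Section pair.
Variables f g : R -> R -> R.
Hypotheses (f_c12 : c12_on T f) (g_c12 : c12_on T g).
Hypothesis fg_growth : forall t x : R, 0 <= t <= T -> `|f t x - g t x| <= K1 * (1 + `|x|).
Hypothesis fg_T : forall x, f T x = g T x.
Hypothesis fg_operator : forall t x : R, 0 < t < T ->
  `|diff_operator f g t x| <= c0 * `|f t x - g t x| + f0.

Lemma max_principle_diff_le t x :
  0 <= t <= T -> f t x - g t x <= T * (expR ((c0 + 1) * T) * f0).
Proof.
move=> tI; apply: (max_principle (a := a) (c0 := c0) (f0 := f0) (K1 := K1) (B0 := B0)
  (u := fun t x => f t x - g t x) (b := b)) tI => //.
- exact: c12_onB.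
- by move=> s y sI /=; apply: le_trans (ler_norm _) (fg_growth y sI).
- by move=> y; rewrite fg_T subrr.
move=> s y sI /=; have sI' : 0 <= s <= T by case/andP: sI => *; rewrite !ltW.
rewrite (pdtB f_c12 g_c12 _ sI) (pdxB f_c12 g_c12 sI') (pdxxB f_c12 g_c12 _ sI') /=.
have := fg_operator y sI; rewrite /diff_operator => /ler_normlP[h _].
by rewrite mulNr -opprD lerNl.
Qed.

End pair.

Lemma max_principle_diff (f g : R -> R -> R) :
  c12_on T f -> c12_on T g ->
  (forall t x : R, 0 <= t <= T -> `|f t x - g t x| <= K1 * (1 + `|x|)) ->
  (forall x, f T x = g T x) ->
  (forall t x : R, 0 < t < T -> `|diff_operator f g t x| <= c0 * `|f t x - g t x| + f0) ->
  forall t x : R, 0 <= t <= T -> `|f t x - g t x| <= T * (expR ((c0 + 1) * T) * f0).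
Proof.
move=> f_c12 g_c12 growth fg_T op_le t x tI.
apply/ler_normlP; split; last exact: max_principle_diff_le.
rewrite opprB; apply: (max_principle_diff_le g_c12 f_c12) => //.
- by move=> s y sI; rewrite distrC; exact: growth.
- move=> s y sI.
  have -> : diff_operator g f s y = - diff_operator f g s y by rewrite /diff_operator; ring.
  by rewrite normrN distrC; exact: op_le.
Qed.

End difference_principle.

Lemma bounded_pdx_linear_growth (R : realType) (T M : R) (F : R -> R -> R) :
  0 <= T -> c12_on T F -> (forall t x : R, 0 <= t <= T -> `|pdx F t x| <= M) ->
  exists2 K, 0 <= K & forall t x : R, 0 <= t <= T -> `|F t x| <= K * (1 + `|x|).
Proof.
move=> T0 [dF _ cF] bF.
have M0 : 0 <= M by apply: le_trans (bF 0 0 _); rewrite ?lexx.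
have c0 : {within `[0, T], continuous (fun t => F t 0)}.
  by apply: (within_continuous_slice _ cF) => s; rewrite /= in_itv.
have [c1 c1I F_le] := EVT_max T0 c0.
have [c2 c2I F_ge] := EVT_min T0 c0.
exists (`|F c1 0| + `|F c2 0| + M); first by rewrite !addr_ge0.
move=> t x tI; have tI' : t \in `[0, T] by rewrite in_itv.
have F0_le : `|F t 0| <= `|F c1 0| + `|F c2 0|.
  have := F_le t tI'; have := F_ge t tI'.
  have := ler_norm (F c1 0); have := ler_norm (- F c2 0); rewrite normrN.
  have := normr_ge0 (F c1 0); have := normr_ge0 (F c2 0).
  by move=> *; apply/ler_normlP; split; lra.
have lip := bounded_derive1_lipschitz (fun y => (dF t y tI).1) (fun y => bF t y tI) 0 x.
rewrite subr0 in lip.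
have : `|F t x| <= `|F t x - F t 0| + `|F t 0|.
  by rewrite -{1}(subrK (F t 0) (F t x)) ler_normD.
have := normr_ge0 x; have : 0 <= (`|F c1 0| + `|F c2 0|) * `|x| by rewrite mulr_ge0 ?addr_ge0.
lra.
Qed.

Lemma bounded_derive1_lipschitz_ex (R : realType) (f : R -> R) :
  (forall y, derivable f y 1) -> (exists M, forall y, `|derive1 f y| <= M) ->
  exists2 L, 0 <= L & forall y z : R, `|f z - f y| <= L * `|z - y|.
Proof.
move=> df [L fL]; exists L; first exact: le_trans (fL 0).
exact: bounded_derive1_lipschitz.
Qed.

Section pde_stability.
Variables (R : realType) (D : lq_data R) (P rho : R -> R).
Implicit Types (F Phi Psi : R -> R -> R) (theta t x : R).

Definition pde_drift F t x :=
  cA D * x + fa D x + cB D * kfun P rho t x (F t x) + btilde D P rho t x (F t x).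

Lemma pde_sol_sub theta Phi Psi t x :
  pde_sol D P rho 0 Phi -> pde_sol D P rho theta Psi -> 0 < t < hT D ->
  pdt Phi t x - pdt Psi t x + pde_drift Psi t x * (pdx Phi t x - pdx Psi t x)
    + 2^-1 * (theta + sig0 D ^+ 2) * (pdxx Phi t x - pdxx Psi t x)
  = - (pdx Phi t x + P t) * (cB D * (kfun P rho t x (Phi t x) - kfun P rho t x (Psi t x))
        + (btilde D P rho t x (Phi t x) - btilde D P rho t x (Psi t x)))
    + 2^-1 * theta * pdxx Phi t x - (cA D + derive1 (fa D) x) * (Phi t x - Psi t x).
Proof.
case=> _ [_ [_ [_ [_ [_ [_ [ePhi _]]]]]]] [_ [_ [_ [_ [_ [_ [_ [ePsi _]]]]]]]] tI.
have := ePhi t x tI; have := ePsi t x tI; rewrite /pde_drift => e2 e1.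
lra.
Qed.

Lemma pde_sol_sub_le theta Phi Psi t x (Lr Lb Pm M Ma1 : R) :
  pde_sol D P rho 0 Phi -> pde_sol D P rho theta Psi -> 0 < t < hT D -> 0 <= theta ->
  (forall y z : R, `|rho z - rho y| <= Lr * `|z - y|) ->
  (forall y z : R, `|fb D z - fb D y| <= Lb * `|z - y|) -> 0 <= Lb ->
  `|derive1 (fa D) x| <= Ma1 -> `|P t| <= Pm ->
  `|pdx Phi t x| <= M -> `|pdxx Phi t x| <= M ->
  `|pdt Phi t x - pdt Psi t x + pde_drift Psi t x * (pdx Phi t x - pdx Psi t x)
    + 2^-1 * (theta + sig0 D ^+ 2) * (pdxx Phi t x - pdxx Psi t x)|
  <= ((M + Pm) * (`|cB D| + Lb) * Lr + (`|cA D| + Ma1)) * `|Phi t x - Psi t x|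
     + 2^-1 * theta * M.
Proof.
move=> hPhi hPsi tI th0 rho_lip b_lip Lb0 a'_le P_le px_le pxx_le.
rewrite (pde_sol_sub x hPhi hPsi tI).
set u := Phi t x - Psi t x.
set k := kfun P rho t x (Phi t x) - kfun P rho t x (Psi t x).
set db := btilde D P rho t x (Phi t x) - btilde D P rho t x (Psi t x).
have k_le : `|k| <= Lr * `|u|.
  have := rho_lip (P t * x + Psi t x) (P t * x + Phi t x).
  by rewrite /k /kfun /u opprD addrACA subrr add0r.
have db_le : `|db| <= Lb * `|k| by exact: b_lip.
have lin_le : `|cB D * k + db| <= (`|cB D| + Lb) * Lr * `|u|.
  apply: le_trans (ler_normD _ _) _; rewrite normrM -mulrA mulrDl.
  by apply: lerD; [apply: ler_wpM2l | apply: le_trans db_le (ler_wpM2l _ _)].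
have coef_le : `|- (pdx Phi t x + P t)| <= M + Pm.
  by rewrite normrN; exact: le_trans (ler_normD _ _) (lerD _ _).
have A_le : `|cA D + derive1 (fa D) x| <= `|cA D| + Ma1.
  exact: le_trans (ler_normD _ _) (lerD _ _).
have th_le : `|2^-1 * theta * pdxx Phi t x| <= 2^-1 * theta * M.
  by rewrite normrM ger0_norm ?mulr_ge0 // ler_wpM2l ?mulr_ge0.
have := ler_pM (normr_ge0 _) (normr_ge0 _) coef_le lin_le.
have := ler_wpM2r (normr_ge0 u) A_le.
rewrite -!normrM => h1 h2.
apply: le_trans (ler_normB _ _) _; apply: le_trans (lerD (ler_normD _ _) (lexx _)) _.
lra.
Qed.

Lemma riccati_bounded : 0 <= hT D -> is_riccati D P ->
  exists2 Pm, 0 <= Pm & forall t, 0 <= t <= hT D -> `|P t| <= Pm.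
Proof.
move=> T0 [Pc _ P_ge0 _]; have [c cI P_le] := EVT_max T0 Pc.
rewrite in_itv /= in cI; exists (P c); first exact: P_ge0.
by move=> t tI; rewrite ger0_norm ?P_ge0 //; apply: P_le; rewrite in_itv.
Qed.

Lemma pde_sol_linear_growth theta F : 0 <= hT D -> pde_sol D P rho theta F ->
  exists2 K, 0 <= K & forall t x, 0 <= t <= hT D -> `|F t x| <= K * (1 + `|x|).
Proof.
move=> T0 hF; have [_ [_ [_ [_ [_ [_ [[M FM] _]]]]]]] := hF.
apply: (bounded_pdx_linear_growth T0 (pde_sol_c12_on hF)) => t x tI.
exact: (FM t x tI).1.
Qed.

Lemma pde_drift_growth theta Psi :
  hypA1 D -> is_rho D rho -> is_riccati D P -> pde_sol D P rho theta Psi ->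
  exists2 B0, 0 <= B0 & forall t x, 0 <= t <= hT D -> `|pde_drift Psi t x| <= B0 * (1 + `|x|).
Proof.
case=> T0 [_ [_ [_ [_ [_ [_ [[_ [_ [_ [[Ma0 a_le] _]]]] [[_ [_ [_ [[Mb0 b_le] _]]]] _]]]]]]]].
case=> drho _ rho'_bdd _ hP hPsi.
have [Lr Lr0 rho_lip] := bounded_derive1_lipschitz_ex drho rho'_bdd.
have [Pm Pm0 P_le] := riccati_bounded (ltW T0) hP.
have [K K0 Psi_le] := pde_sol_linear_growth (ltW T0) hPsi.
have Ma00 : 0 <= Ma0 by exact: le_trans (a_le 0).
have Mb00 : 0 <= Mb0 by exact: le_trans (b_le 0).
set r := `|rho 0| + Lr * (Pm + K).
have r0 : 0 <= r by rewrite addr_ge0 ?mulr_ge0 ?addr_ge0.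
exists (`|cA D| + Ma0 + `|cB D| * r + Mb0); first by rewrite !addr_ge0 ?mulr_ge0.
move=> t x tI; have x0 := normr_ge0 x.
have arg_le : `|P t * x + Psi t x| <= (Pm + K) * (1 + `|x|).
  apply: le_trans (ler_normD _ _) _; rewrite normrM.
  have := ler_wpM2r x0 (P_le t tI); have := Psi_le t x tI.
  have := mulr_ge0 Pm0 x0; lra.
have k_le : `|kfun P rho t x (Psi t x)| <= r * (1 + `|x|).
  have := rho_lip 0 (P t * x + Psi t x); rewrite !subr0 => lip.
  have := ler_wpM2l Lr0 arg_le; have := mulr_ge0 (normr_ge0 (rho 0)) x0.
  have : `|rho (P t * x + Psi t x)| <= `|rho (P t * x + Psi t x) - rho 0| + `|rho 0|.
    by rewrite -{1}(subrK (rho 0) (rho (P t * x + Psi t x))) ler_normD.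
  rewrite /kfun /r; lra.
have := ler_wpM2l (normr_ge0 (cB D)) k_le.
have := a_le x; have := b_le (kfun P rho t x (Psi t x)).
have := mulr_ge0 Ma00 x0; have := mulr_ge0 Mb00 x0; have := normr_ge0 (cA D).
have : `|pde_drift Psi t x| <= `|cA D| * `|x| + `|fa D x|
    + `|cB D| * `|kfun P rho t x (Psi t x)| + `|btilde D P rho t x (Psi t x)|.
  rewrite -!normrM /pde_drift.
  apply: le_trans (ler_normD _ _) _; rewrite lerD2r.
  apply: le_trans (ler_normD _ _) _; rewrite lerD2r.
  exact: ler_normD.
rewrite /btilde; lra.
Qed.

Lemma pde_sol_stability Phi :
  hypA1 D -> is_rho D rho -> is_riccati D P -> pde_sol D P rho 0 Phi ->
  exists C, forall theta Psi, 0 <= theta -> pde_sol D P rho theta Psi ->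
    forall t x, 0 <= t <= hT D -> `|Phi t x - Psi t x| <= C * theta.
Proof.
move=> hA1 hrho hP hPhi.
have [T0 [_ [_ [_ [_ [_ [_ [[_ [_ [_ [_ [[Ma1 a'_le] _]]]]] [[db [_ [_ [_ [b'_bdd _]]]]] _]]]]]]]]]
  := hA1.
have Ma10 : 0 <= Ma1 by exact: le_trans (a'_le 0).
have [drho _ rho'_bdd _] := hrho.
have [Lr Lr0 rho_lip] := bounded_derive1_lipschitz_ex drho rho'_bdd.
have [Lb Lb0 b_lip] := bounded_derive1_lipschitz_ex db b'_bdd.
have [Pm Pm0 P_le] := riccati_bounded (ltW T0) hP.
have [_ [_ [_ [_ [_ [_ [[M Phi_d] [_ Phi_T]]]]]]]] := hPhi.
have M0 : 0 <= M.
  have I0 : 0 <= (0 : R) <= hT D by rewrite lexx ltW.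
  exact: le_trans (normr_ge0 _) (Phi_d 0 0 I0).1.
set c0 := (M + Pm) * (`|cB D| + Lb) * Lr + (`|cA D| + Ma1).
exists (hT D * expR ((c0 + 1) * hT D) * 2^-1 * M) => theta Psi th0 hPsi t x tI.
have [KPhi KPhi0 Phi_le] := pde_sol_linear_growth (ltW T0) hPhi.
have [KPsi KPsi0 Psi_le] := pde_sol_linear_growth (ltW T0) hPsi.
have [B0 B00 drift_le] := pde_drift_growth hA1 hrho hP hPsi.
have [_ [_ [_ [_ [_ [_ [_ [_ Psi_T]]]]]]]] := hPsi.
have -> : hT D * expR ((c0 + 1) * hT D) * 2^-1 * M * theta
    = hT D * (expR ((c0 + 1) * hT D) * (2^-1 * theta * M)) by ring.
apply: (max_principle_diff (a := 2^-1 * (theta + sig0 D ^+ 2)) (c0 := c0)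
  (K1 := KPhi + KPsi) (B0 := B0) (b := pde_drift Psi)) tI => //.
- by rewrite mulr_ge0 ?addr_ge0 ?sqr_ge0.
- by rewrite !addr_ge0 ?mulr_ge0 ?addr_ge0.
- by rewrite !mulr_ge0.
- by rewrite addr_ge0.
- by move=> s y /andP[s0 sT]; apply: drift_le; rewrite !ltW.
- exact: pde_sol_c12_on hPhi.
- exact: pde_sol_c12_on hPsi.
- move=> s y sI; apply: le_trans (ler_normB _ _) _.
  by have := Phi_le s y sI; have := Psi_le s y sI; lra.
- by move=> y; rewrite Phi_T Psi_T.
- move=> s y sI; have sI' : 0 <= s <= hT D by case/andP: sI => *; rewrite !ltW.
  have [px_le pxx_le] := Phi_d s y sI'.
  exact: (pde_sol_sub_le hPhi hPsi sI th0 rho_lip b_lip Lb0 (a'_le y) (P_le s sI') px_le pxx_le).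
Qed.

End pde_stability.

Section expectation_bound.
Import HBNNSimple.

(* No measurability is needed: the integral of a nonnegative function is the
   supremum of the integrals of the simple functions below it. *)
Lemma probability_integral_le_cst (R : realType) (d : measure_display)
    (Omega : measurableType d) (Pr : probability Omega R) (f : Omega -> \bar R) (c : R) :
  0 <= c -> (forall w, (0 <= f w <= c%:E)%E) -> (\int[Pr]_w f w <= c%:E)%E.
Proof.
move=> c0 f_bd.
rewrite ge0_integralTE; last by move=> w; case/andP: (f_bd w).
apply/ge_ereal_sup => _ [h /= h_le <-].
apply: le_trans (@le_sintegral _ _ R Pr h (cst_nnsfun Omega (NngNum c0)) _) _.
  by move=> w /=; rewrite -lee_fin; apply: le_trans (h_le w) _; case/andP: (f_bd w).
have := @sintegral_EFin_cst _ Omega R Pr setT (NngNum c0).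
by rewrite patch_setT /= => ->; rewrite probability_setT mule1.
Qed.

End expectation_bound.

Lemma sup_on_bounds (R : realType) (T c : R) (f : R -> R) : 0 <= T ->
  (forall t, 0 <= t <= T -> 0 <= f t <= c) -> (0 <= sup_on T f <= c%:E)%E.
Proof.
move=> T0 f_bd; apply/andP; split.
  apply: le_trans (ereal_sup_ubound _); last by exists 0; rewrite //= in_itv /= lexx.
  by have := f_bd 0; rewrite lexx T0 lee_fin => /(_ isT) /andP[f0 _].
by apply: ge_ereal_sup => _ [t + <-]; rewrite /= in_itv lee_fin => /f_bd /andP[_ fc].
Qed.

Lemma feedback_sub_le (R : realType) (D : lq_data R) (P rho : R -> R)
    (Phi Psi : R -> R -> R) (Lr e t x y : R) :
  (forall y z : R, `|rho z - rho y| <= Lr * `|z - y|) ->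
  `|Phi t y - Psi t y| <= e -> 0 <= Lr ->
  `|feedback D P rho Phi t x y - feedback D P rho Psi t x y| <= Lr * e.
Proof.
move=> rho_lip PhiPsi Lr0.
have -> : feedback D P rho Phi t x y - feedback D P rho Psi t x y
    = rho (P t * y + Phi t y) - rho (P t * y + Psi t y) by rewrite /feedback /kfun; ring.
apply: le_trans (rho_lip _ _) _; apply: ler_wpM2l => //.
by rewrite opprD addrACA subrr add0r.
Qed.

Unset Implicit Arguments.

Theorem mainTheorem15 (R : realType) (D : lq_data R)
    (P rho : R -> R) (Phi : R -> R -> R) (mu : probability R R) :
  hypA1 D -> hypA3 D -> is_rho D rho -> is_riccati D P -> hypA4 D P ->
  pde_sol D P rho 0 Phi ->
  (\int[mu]_x (x ^+ 2)%:E < +oo)%E ->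
  exists K : R, forall (N : nat), (0 < N)%N ->
  forall Psi : R -> R -> R, pde_sol D P rho (sig D ^+ 2 / N%:R) Psi ->
  forall (d : measure_display) (Omega : measurableType d) (Pr : probability Omega R)
    (xi : 'I_N -> Omega -> R) (W0 : R -> Omega -> R) (W : 'I_N -> R -> Omega -> R)
    (xbar : 'I_N -> R -> Omega -> R),
  measure_is_complete Pr ->
  (forall i, measurable_fun setT (xi i)) ->
  (forall i (B : set R), measurable B -> Pr (xi i @^-1` B) = mu B) ->
  is_BM Pr (hT D) W0 -> (forall i, is_BM Pr (hT D) (W i)) ->
  lp_indep Pr (hT D) xi W0 W ->
  solves_LP Pr D P rho Psi xi W0 W xbar ->
  forall i : 'I_N,
    (\int[Pr]_w
       sup_on (hT D) (fun t =>
         `| feedback D P rho Phi t (xbar i t w) (emp_mean (fun j u => xbar j u w) t)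
          - feedback D P rho Psi t (xbar i t w) (emp_mean (fun j u => xbar j u w) t) | ^+ 2)%R
     <= (K / N%:R ^+ 2)%R%:E)%E.
Proof.
move=> hA1 _ hrho hP _ hPhi _.
have [Lr Lr0 rho_lip] : exists2 Lr, 0 <= Lr & forall y z : R, `|rho z - rho y| <= Lr * `|z - y|.
  by case: hrho => drho _ rho'_bdd _; exact: bounded_derive1_lipschitz_ex.
have [C stab] := pde_sol_stability hA1 hrho hP hPhi.
have T0 : 0 <= hT D by case: hA1 => /ltW.
exists ((Lr * C * sig D ^+ 2) ^+ 2) => N N_gt0 Psi hPsi d Omega Pr xi W0 W xbar _ _ _ _ _ _ _ i.
have theta_ge0 : 0 <= sig D ^+ 2 / N%:R by rewrite divr_ge0 ?sqr_ge0 ?ler0n.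
apply: probability_integral_le_cst => [|w]; first by rewrite divr_ge0 ?sqr_ge0 ?exprn_ge0 ?ler0n.
apply: sup_on_bounds T0 _ => t tI; rewrite sqr_ge0 /=.
set m := emp_mean (fun j u => xbar j u w) t.
have := feedback_sub_le D P (xbar i t w) rho_lip (stab _ Psi theta_ge0 hPsi t m tI) Lr0.
have -> : (Lr * C * sig D ^+ 2) ^+ 2 / N%:R ^+ 2 = (Lr * (C * (sig D ^+ 2 / N%:R))) ^+ 2.
  by field; rewrite pnatr_eq0 -lt0n.
by move=> fb_le; rewrite !expr2; apply: ler_pM.
Qed.
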